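(* Let $H$ be a cocommutative Hopf algebra over a field of characteristic $0$ and $V$ a finite-dimensional $H$-module. Then $(K_i)_{i\ge0}$ is an algebra filtration of $H$, i.e. $K_i\subseteq K_{i+1}$ and $K_iK_j\subseteq K_{i+j}$ for all $i,j\ge0$.
   Context: Sweedler notation $\Delta h=h_{(1)}\otimes h_{(2)}$, counit $\varepsilon$; $h\triangleright v:=h\cdot v-\varepsilon(h)v$ for $h\in H,v\in V$. For $i\ge0$, $K'_i\subseteq H$ is the subspace of $h$ with $(h_{(1)}\triangleright v_1)\wedge\cdots\wedge(h_{(i+1)}\triangleright v_{i+1})=0$ in $\wedge^{i+1}V$ for all $v_1,\dots,v_{i+1}\in V$, and $K_i:=\Delta^{-1}(K'_i\otimes H)$. *)

From HB Require Import structures.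
From mathcomp Require Import all_boot all_order all_algebra.
Set Implicit Arguments. Unset Strict Implicit. Unset Printing Implicit Defensive.
Import GRing.Theory.
Local Open Scope ring_scope.

(* Tensors in H ⊗ H (resp. H ⊗ H ⊗ H) are represented by finite Sweedler
   sums  sum_p p.1 ⊗ p.2 , i.e. by  s : seq (H * H).  Two such sums denote
   the same tensor iff they agree under every bilinear (resp. trilinear)
   form, since (H⊗H)^* = bilinear forms separates points of H⊗H. *)

Section Hopf.
Variables (k : fieldType) (H : algType k).

Definition bilinear_form (b : H -> H -> k) : Prop :=
  (forall (c : k) (x y z : H), b (c *: x + y) z = c * b x z + b y z) /\
  (forall (c : k) (x y z : H), b z (c *: x + y) = c * b z x + b z y).

Definition trilinear_form (t : H -> H -> H -> k) : Prop :=
  (forall (c : k) (x y u v : H), t (c *: x + y) u v = c * t x u v + t y u v) /\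
  (forall (c : k) (x y u v : H), t u (c *: x + y) v = c * t u x v + t u y v) /\
  (forall (c : k) (x y u v : H), t u v (c *: x + y) = c * t u v x + t u v y).

Definition sw2 (s : seq (H * H)) (b : H -> H -> k) : k :=
  \sum_(p <- s) b p.1 p.2.

Definition teq2 (s t : seq (H * H)) : Prop :=
  forall b, bilinear_form b -> sw2 s b = sw2 t b.

Record is_hopf (D : H -> seq (H * H)) (eps : H -> k) (S : H -> H) : Prop := {
  eps_linear : forall (c : k) (x y : H), eps (c *: x + y) = c * eps x + eps y;
  eps_mul    : forall x y : H, eps (x * y) = eps x * eps y;
  eps_one    : eps 1 = 1;
  D_linear   : forall (c : k) (x y : H) b, bilinear_form b ->
                 sw2 (D (c *: x + y)) b = c * sw2 (D x) b + sw2 (D y) b;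
  D_mul      : forall x y : H, teq2 (D (x * y))
                 [seq (p.1 * q.1, p.2 * q.2) | p <- D x, q <- D y];
  D_one      : teq2 (D 1) [:: (1, 1)];
  D_coassoc  : forall (h : H) t, trilinear_form t ->
                 \sum_(p <- D h) \sum_(q <- D p.1) t q.1 q.2 p.2 =
                 \sum_(p <- D h) \sum_(q <- D p.2) t p.1 q.1 q.2;
  counit_l   : forall h : H, \sum_(p <- D h) eps p.1 *: p.2 = h;
  counit_r   : forall h : H, \sum_(p <- D h) eps p.2 *: p.1 = h;
  S_linear   : forall (c : k) (x y : H), S (c *: x + y) = c *: S x + S y;
  antipode_l : forall h : H, \sum_(p <- D h) S p.1 * p.2 = (eps h)%:A;
  antipode_r : forall h : H, \sum_(p <- D h) p.1 * S p.2 = (eps h)%:A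
}.

Definition cocommutative (D : H -> seq (H * H)) : Prop :=
  forall h : H, teq2 (D h) [seq (p.2, p.1) | p <- D h].

(* iterated coproduct: iterD n h = h_(1) ⊗ ... ⊗ h_(n+1) as a sum of
   lists of length n+1, computed as h_(1) ⊗ Δ^(n-1)(h_(2)) *)
Fixpoint iterD (D : H -> seq (H * H)) (n : nat) (h : H) : seq (seq H) :=
  match n with
  | 0 => [:: [:: h]]
  | n'.+1 => flatten [seq [seq p.1 :: t | t <- iterD D n' p.2] | p <- D h]
  end.

Section Module.
Variable (V : vectType k).

Record is_module (act : H -> V -> V) : Prop := {
  act_linear_l : forall (c : k) (x y : H) (v : V),
                   act (c *: x + y) v = c *: act x v + act y v;
  act_linear_r : forall (c : k) (x : H) (v w : V),
                   act x (c *: v + w) = c *: act x v + act x w;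
  act_one      : forall v : V, act 1 v = v;
  act_mul      : forall (x y : H) (v : V), act (x * y) v = act x (act y v)
}.

Variables (D : H -> seq (H * H)) (eps : H -> k) (act : H -> V -> V).

Definition tri (h : H) (v : V) : V := act h v - eps h *: v.

(* Pairing of w_1 ∧ ... ∧ w_n ∈ ∧^n V with f_1 ∧ ... ∧ f_n ∈ ∧^n V^*:
   det (f_j (w_i)).  This pairing is nondegenerate (V finite-dimensional),
   so an element of ∧^n V is zero iff all these pairings vanish. *)
Definition wedge_pair (n : nat) (w : 'I_n -> V) (f : 'I_n -> 'Hom(V, k^o)) : k :=
  \det (\matrix_(a < n, b < n) (f b (w a) : k)).

(* K'_i : sum_t (t_1 ▷ v_1) ∧ ... ∧ (t_{i+1} ▷ v_{i+1}) = 0 in ∧^{i+1} V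
   for all v_1, ..., v_{i+1} *)
Definition Kp (i : nat) (h : H) : Prop :=
  forall (v : 'I_i.+1 -> V) (f : 'I_i.+1 -> 'Hom(V, k^o)),
    \sum_(t <- iterD D i h)
       wedge_pair (fun a : 'I_i.+1 => tri (nth 0 t a) (v a)) f = 0.

(* K_i := Δ^{-1}(K'_i ⊗ H): Δ h is a sum of a ⊗ b with a ∈ K'_i *)
Definition K (i : nat) (h : H) : Prop :=
  exists s : seq (H * H), (forall p, p \in s -> Kp i p.1) /\ teq2 (D h) s.

End Module.
End Hopf.

(* Dualise: h is in K_i iff (L (x) mu)(Delta h) = 0 for every functional
   L x = <(x_(1) |> v_1) /\ ... /\ (x_(i+1) |> v_(i+1)), f_1 /\ ... /\ f_(i+1)>
   and every linear mu.  The converse direction holds because, L being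
   multilinear in the v's and f's, finitely many of them (on basis vectors)
   span all; so Delta h can be rewritten with first tensor legs in their common
   kernel K'_i.
   Bilinear forms on H form a commutative ring under convolution (H is
   cocommutative), and evaluating a determinant in that ring at x (x) y sums
   ordinary determinants over the iterated coproducts of x and y.  Since
   (xy) |> v = x |> (y.v) + eps(x) (y |> v), the form x (x) y |-> L (xy) is
   the determinant of a matrix whose rows are sums P_a + Q_a, with
   P_a(x, y) = f(x |> (y.v_a)) and Q_a(x, y) = eps(x) f(y |> v_a).  Expanding
   by rows, every term has at least i+1 rows P or at least j+1 rows Q, and by
   Laplace expansion lies in the ideal generated by the corresponding minors.
   When g is in K_i, resp. h is in K_j, these minors Psi satisfy
   (Psi * Theta)(g, h) = 0 for all Theta; for Theta (x, y) = mu (xy) this is,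
   by multiplicativity of Delta, the condition defining gh in K_(i+j).
   Finally K_i is in K_(i+1) because 1 is in K_1. *)

From Pilot Require Import Defs.
From HB Require Import structures.
From mathcomp Require Import all_boot all_order all_algebra.
From mathcomp Require Import boolp zify.
Set Implicit Arguments. Unset Strict Implicit. Unset Printing Implicit Defensive.
Import GRing.Theory.
Local Open Scope ring_scope.

(* [iterD] is also the name of an ssrnat lemma. *)
Local Notation iterD := Defs.iterD.

Section ScalarFunctions.
Variables (R : comPzRingType) (U : lmodType R).
Implicit Types phi psi : U -> R.

Lemma scalarfB phi : scalar phi -> {morph phi : x y / x - y}.
Proof. exact: zmod_morphism_linear. Qed.

Lemma scalarf0 phi : scalar phi -> phi 0 = 0.
Proof. by move=> /scalarfB phiB; rewrite -(subrr 0) phiB subrr. Qed.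

Lemma scalarfD phi : scalar phi -> {morph phi : x y / x + y}.
Proof. by move=> phiP x y; have := phiP 1 x y; rewrite scale1r mul1r. Qed.

Lemma scalarfZ phi : scalar phi -> forall a x, phi (a *: x) = a * phi x.
Proof. exact: scalable_linear. Qed.

Lemma scalarf_sum phi I (r : seq I) (F : I -> U) : scalar phi ->
  phi (\sum_(i <- r) F i) = \sum_(i <- r) phi (F i).
Proof. by move=> phiP; apply: big_morph; [apply: scalarfD | apply: scalarf0]. Qed.

Lemma scalar_sumf I (r : seq I) (F : I -> U -> R) :
  (forall i, scalar (F i)) -> scalar (fun x => \sum_(i <- r) F i x).
Proof.
by move=> FP a x y; rewrite mulr_sumr -big_split; apply: eq_bigr => i _; apply: FP.
Qed.

Lemma scalar_mulrf phi c : scalar phi -> scalar (fun x => phi x * c).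
Proof. by move=> phiP a x y /=; rewrite phiP mulrDl mulrA. Qed.

Lemma scalar_mullf c phi : scalar phi -> scalar (fun x => c * phi x).
Proof. by move=> phiP a x y /=; rewrite phiP mulrDr mulrCA. Qed.

Lemma scalar_addf phi psi : scalar phi -> scalar psi -> scalar (fun x => phi x + psi x).
Proof. by move=> phiP psiP a x y; rewrite phiP psiP mulrDr addrACA. Qed.

Lemma scalar_oppf phi : scalar phi -> scalar (fun x => - phi x).
Proof. by move=> phiP a x y; rewrite phiP opprD mulrN. Qed.

End ScalarFunctions.

Lemma lift_eqF n (i : 'I_n) j : (lift i j == i) = false.
Proof. by apply/negbTE; rewrite eq_sym neq_lift. Qed.

Lemma nth_cat_cons T (x0 : T) (l r : seq T) z i :
  nth x0 (l ++ z :: r) i = if i == size l then z else nth x0 (l ++ x0 :: r) i.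
Proof.
rewrite !nth_cat; case: ltngtP => [//|lt_l_i|->]; last by rewrite subnn.
by rewrite -(subnSK lt_l_i).
Qed.

Definition multilinear (R : pzRingType) (U : lmodType R) n (G : ('I_n -> U) -> R) :=
  forall (w : 'I_n -> U) a, scalar (fun x => G [eta w with a |-> x]).

Lemma det_multilinear (R : comPzRingType) (U : lmodType R) n (G : 'I_n -> 'I_n -> U -> R) :
  (forall a b, scalar (G a b)) -> multilinear (fun w => \det (\matrix_(a, b) G a b (w a))).
Proof.
move=> GP w a0 c x y; rewrite (@determinant_multilinear _ _ _
  (\matrix_(a, b) G a b ([eta w with a0 |-> x] a))
  (\matrix_(a, b) G a b ([eta w with a0 |-> y] a)) a0 c 1) ?mul1r //.
- by apply/rowP => b; rewrite !mxE /= eqxx GP mul1r.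
- by apply/matrixP; move=> a b; rewrite !mxE /= lift_eqF.
- by apply/matrixP; move=> a b; rewrite !mxE /= lift_eqF.
Qed.

Lemma det_scale_rows (R : comPzRingType) n (c : 'I_n -> R) (A : 'M[R]_n) :
  \det (\matrix_(a, b) (c a * A a b)) = (\prod_a c a) * \det A.
Proof.
have -> : \matrix_(a, b) (c a * A a b) = diag_mx (\row_a c a) *m A.
  by apply/matrixP => a b; rewrite mul_diag_mx !mxE.
by rewrite det_mulmx det_diag; congr (_ * _); apply: eq_bigr => a _; rewrite mxE.
Qed.

(** * Determinants with entries in an ideal *)

Section DeterminantIdeal.
Variables (R : comPzRingType) (Z : R -> Prop).
Hypotheses (Z0 : Z 0) (ZD : forall a b, Z a -> Z b -> Z (a + b))
  (ZM : forall a b, Z b -> Z (a * b)).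

Lemma ideal_sum I (r : seq I) (P : pred I) (F : I -> R) :
  (forall i, P i -> Z (F i)) -> Z (\sum_(i <- r | P i) F i).
Proof. by move=> ZF; apply: big_ind. Qed.

Lemma det_ideal_expand n (M : 'M[R]_n.+1) r :
  (forall b, Z (\det (row' r (col' b M)))) -> Z (\det M).
Proof.
move=> Zminor; rewrite (expand_det_row M r); apply: ideal_sum => b _.
by rewrite /cofactor; apply/ZM/ZM.
Qed.

Lemma det_ideal_rows (A B : Type) (F : A -> B -> R) m :
  (forall (w : 'I_m -> A) (f : 'I_m -> B), Z (\det (\matrix_(a, b) F (w a) (f b)))) ->
  forall n (M : 'M[R]_n) (P : pred 'I_n) (w : 'I_n -> A) (f : 'I_n -> B),
  (m <= \sum_a P a)%N -> (forall a b, P a -> M a b = F (w a) (f b)) -> Z (\det M).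
Proof.
move=> Zbase n; elim: n => [|n IHn] M P w f leMP MP.
  move: leMP; rewrite big_ord0 leqn0 => /eqP m0; subst m.
  by move: (Zbase w f); rewrite !det_mx00.
have expand r : (m <= \sum_a P (lift r a))%N -> Z (\det M).
  move=> leMPr; apply: (det_ideal_expand (r := r)) => b.
  apply: (IHn _ _ (w \o lift r) (f \o lift b) leMPr) => a c Pa.
  by rewrite !mxE MP.
have [r /negbTE Pr | allP] := pickP (fun a => ~~ P a).
  by apply: (expand r); move: leMP; rewrite (bigD1_ord r) //= Pr.
have {}allP a : P a by move: (allP a) => /negbFE.
have sumP (r : 'I_n.+1) : (\sum_(a < n) P (lift r a) = n)%N.
  by rewrite (eq_bigr (fun _ => 1%N)) ?sum1_card ?card_ord // => a _; rewrite allP.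
have [ltnm | lemn] := ltnP n m; last by apply: (expand ord0); rewrite sumP.
have m_eq : m = n.+1.
  by apply/eqP; rewrite eqn_leq ltnm andbT; move: leMP; rewrite (bigD1_ord ord0) // sumP allP.
subst m; suff -> : M = \matrix_(a, b) F (w a) (f b) by [].
by apply/matrixP => a b; rewrite mxE MP.
Qed.

Section SumRows.
Variables (A B : Type) (FP FQ : A -> B -> R) (m1 m2 : nat).
Hypothesis ZP : forall (w : 'I_m1 -> A) (f : 'I_m1 -> B),
  Z (\det (\matrix_(a, b) FP (w a) (f b))).
Hypothesis ZQ : forall (w : 'I_m2 -> A) (f : 'I_m2 -> B),
  Z (\det (\matrix_(a, b) FQ (w a) (f b))).

Definition mixed_mx n (kind : 'I_n -> option bool) (w : 'I_n -> A) (f : 'I_n -> B) :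
    'M[R]_n :=
  \matrix_(a, b) match kind a with
                 | Some true => FP (w a) (f b)
                 | Some false => FQ (w a) (f b)
                 | None => FP (w a) (f b) + FQ (w a) (f b)
                 end.

Lemma det_mixed_mx_ideal n kind (w : 'I_n -> A) (f : 'I_n -> B) :
  (m1 + m2 <= n.+1)%N -> Z (\det (mixed_mx kind w f)).
Proof.
move=> le_m_n; move: {2}(\sum_a (kind a == None))%N (leqnn (\sum_a (kind a == None))%N).
move=> c; elim: c kind => [|c IHc] kind.
  rewrite leqn0 sum_nat_eq0 => /forallP kindS.
  have sumPQ : (\sum_a (kind a == Some true) + \sum_a (kind a == Some false) = n)%N.
    rewrite -big_split /= (eq_bigr (fun _ => 1%N)) ?sum1_card ?card_ord // => a _.
    by move: (kindS a); case: (kind a) => [[]|].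
  have [leP | ltP] := leqP m1 (\sum_a (kind a == Some true)).
    by apply: (det_ideal_rows ZP leP) => a b /eqP ka; rewrite mxE ka.
  have leQ : (m2 <= \sum_a (kind a == Some false))%N by lia.
  by apply: (det_ideal_rows ZQ leQ) => a b /eqP ka; rewrite mxE ka.
move=> le_c; have [a0 /eqP ka0 | kindS] := pickP (fun a => kind a == None); last first.
  by apply: IHc; rewrite big1 // => a _; rewrite kindS.
pose kind_at (o : bool) a := if a == a0 then Some o else kind a.
have le_c_at o : (\sum_a (kind_at o a == None) <= c)%N.
  rewrite (bigD1_ord a0) //= /kind_at eqxx add0n.
  under eq_bigr => a _ do rewrite lift_eqF.
  by move: le_c; rewrite (bigD1_ord a0) //= ka0 add1n ltnS.
rewrite (@determinant_multilinear _ _ _ (mixed_mx (kind_at true) w f)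
   (mixed_mx (kind_at false) w f) a0 1 1) ?mul1r; first exact/ZD/IHc/le_c_at/IHc/le_c_at.
- by apply/rowP => b; rewrite !mxE /kind_at eqxx ka0 !mul1r.
- by apply/matrixP; move=> a b; rewrite !mxE /kind_at lift_eqF.
- by apply/matrixP; move=> a b; rewrite !mxE /kind_at lift_eqF.
Qed.

Lemma det_sum_rows_ideal n (w : 'I_n -> A) (f : 'I_n -> B) :
  (m1 + m2 <= n.+1)%N -> Z (\det (\matrix_(a, b) (FP (w a) (f b) + FQ (w a) (f b)))).
Proof. exact: (@det_mixed_mx_ideal n (fun _ => None)). Qed.

End SumRows.

End DeterminantIdeal.

Section MultilinearBasis.
Variables (k : fieldType) (U : vectType k) (n : nat).
Local Notation basisU := (vbasis {: U}).

Lemma multilinear_basis_eq0 (G : ('I_n -> U) -> k) : multilinear G ->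
  (forall c : 'I_n -> 'I_(\dim {: U}), G (fun a => basisU`_(c a)) = 0) ->
  forall w, G w = 0.
Proof.
move=> Glin Gbasis.
suff basis_above m w :
    (forall a : 'I_n, (m <= a)%N -> exists j : 'I_(\dim {: U}), w a = basisU`_j) ->
    G w = 0.
  by move=> w; apply: (basis_above n) => a; rewrite leqNgt ltn_ord.
elim: m w => [|m IHm] w wbasis.
  have [c wc] := fin_all_exists (fun a => wbasis a (leq0n a)).
  by rewrite (funext wc); apply: Gbasis.
have [ltmn | lenm] := ltnP m n; last first.
  by apply: IHm => a /(leq_trans lenm); rewrite leqNgt ltn_ord.
pose a0 := Ordinal ltmn.
have -> : w = [eta w with a0 |-> w a0] by apply: funext => b /=; case: eqP => // ->.
rewrite (coord_vbasis (memvf (w a0))) (scalarf_sum _ _ (Glin w a0)) big1 // => j _.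
rewrite (scalarfZ (Glin w a0)) IHm ?mulr0 // => a lema /=.
case: eqP => [_| /eqP neq_a]; first by exists j.
by apply: wbasis; rewrite ltn_neqAle lema andbT; apply: contra neq_a => /eqP ma; apply/eqP/val_inj.
Qed.

End MultilinearBasis.

Section FiniteFamilyOfFunctionals.
Variables (k : fieldType) (U : lmodType k) (I : finType) (L : I -> U -> k).
Hypothesis L_scalar : forall i, scalar (L i).

Definition in_span (lam : U -> k) := exists c : I -> k, forall x, lam x = \sum_i c i * L i x.

Lemma in_span_L i : in_span (L i).
Proof.
exists (fun i' => (i' == i)%:R) => x.
by rewrite (bigD1 i) //= eqxx mul1r big1 ?addr0 // => i' /negbTE->; rewrite mul0r.
Qed.

Lemma in_spanB lam mu : in_span lam -> in_span mu -> in_span (fun x => lam x - mu x).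
Proof.
move=> [c lamE] [d muE]; exists (fun i => c i - d i) => x.
by rewrite lamE muE -sumrB; apply: eq_bigr => i _; rewrite mulrBl.
Qed.

Lemma in_span_mulr lam a : in_span lam -> in_span (fun x => lam x * a).
Proof.
move=> [c lamE]; exists (fun i => c i * a) => x.
by rewrite lamE mulr_suml; apply: eq_bigr => i _; rewrite mulrAC.
Qed.

Lemma in_span_sum m (F : 'I_m -> U -> k) :
  (forall j, in_span (F j)) -> in_span (fun x => \sum_j F j x).
Proof.
move=> /fin_all_exists [c FE]; exists (fun i => \sum_j c j i) => x.
rewrite (eq_bigr _ (fun j _ => FE j x)) exchange_big /=.
by apply: eq_bigr => i _; rewrite mulr_suml.
Qed.

(* The functionals are treated one at a time; when [L i] is not yet reproduced,
   the new pair [(e0, lam0)] repairs it, and [e0] lies in the kernel of the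
   functionals already treated. *)
Lemma functionals_dual_family : exists m (e : 'I_m -> U) (lam : 'I_m -> U -> k),
  (forall j, in_span (lam j)) /\ forall i x, L i x = \sum_j lam j x * L i (e j).
Proof.
suff /(_ (enum I)) [m [e [lam [lam_span LE]]]] : forall r : seq I,
    exists m (e : 'I_m -> U) (lam : 'I_m -> U -> k), (forall j, in_span (lam j)) /\
    forall i, i \in r -> forall x, L i x = \sum_j lam j x * L i (e j).
  by exists m, e, lam; split=> // i; apply: LE; rewrite mem_enum.
elim=> [|i r [m [e [lam [lam_span LE]]]]].
  by exists 0%N, (fun=> 0), (fun=> fun=> 0); split=> [[]|].
pose rest x := L i x - \sum_j lam j x * L i (e j).
have [[x0 rest_x0] | rest0] := pselect (exists x0, rest x0 != 0); last first.
  exists m, e, lam; split=> // i'; rewrite inE => /predU1P [-> x|]; last exact: LE.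
  by apply/eqP; rewrite -subr_eq0; apply/negPn/negP => rest_x; apply: rest0; exists x.
pose e0 := x0 - \sum_j lam j x0 *: e j.
pose lam0 x := rest x * (rest x0)^-1.
have L_e0 i' : L i' e0 = L i' x0 - \sum_j lam j x0 * L i' (e j).
  rewrite scalarfB // scalarf_sum //.
  by congr (_ - _); apply: eq_bigr => j _; rewrite scalarfZ.
exists m.+1, (fun j => if unlift ord0 j is Some j' then e j' else e0).
exists (fun j => if unlift ord0 j is Some j' then lam j' else lam0); split.
  move=> j; case: (unlift ord0 j) => [j'|]; first exact: lam_span.
  apply/in_span_mulr/in_spanB; first exact: in_span_L.
  by apply: in_span_sum => j'; apply/in_span_mulr/lam_span.
move=> i'; rewrite inE => /predU1P [-> x|i'r x]; rewrite big_ord_recl unlift_none;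
  under eq_bigr => j _ do rewrite liftK.
  by rewrite L_e0 -/(rest x0) /lam0 divfK // /rest subrK.
by rewrite L_e0 -LE // subrr mulr0 add0r -LE.
Qed.

End FiniteFamilyOfFunctionals.

(** * The convolution algebra of bilinear forms *)

Section ConvolutionAlgebra.
Variables (k : fieldType) (H : algType k) (D : H -> seq (H * H)) (eps : H -> k).
Variable S : H -> H.
Hypotheses (hopfH : is_hopf D eps S) (cocomD : cocommutative D).

Lemma bilinear_formP (b : H -> H -> k) :
  bilinear_form b <-> (forall y, scalar (b^~ y)) /\ (forall x, scalar (b x)).
Proof.
split=> [[bl br]|[bl br]]; split.
- by move=> y a x x'; apply: bl.
- by move=> x a y y'; apply: br.
- by move=> a x x' y; apply: (bl y).
- by move=> a y y' x; apply: (br x).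
Qed.

Section ComulSums.
Variable t : H -> H -> k.
Hypotheses (t_scalarl : forall y, scalar (t^~ y)) (t_scalarr : forall x, scalar (t x)).
Let t_bil : bilinear_form t. Proof. exact/bilinear_formP. Qed.

Lemma comul_scalar : scalar (fun h => \sum_(p <- D h) t p.1 p.2).
Proof. by move=> a x y; have := D_linear hopfH a x y t_bil. Qed.

Lemma comul_cocomm h : \sum_(p <- D h) t p.1 p.2 = \sum_(p <- D h) t p.2 p.1.
Proof. by have := cocomD h t_bil; rewrite /sw2 big_map. Qed.

Lemma comul1 : \sum_(p <- D 1) t p.1 p.2 = t 1 1.
Proof. by have := D_one hopfH t_bil; rewrite /sw2 big_seq1. Qed.

Lemma comulM x y : \sum_(p <- D (x * y)) t p.1 p.2 =
  \sum_(p <- D x) \sum_(q <- D y) t (p.1 * q.1) (p.2 * q.2).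
Proof. by have := D_mul hopfH x y t_bil; rewrite /sw2 big_allpairs_dep. Qed.

End ComulSums.

Lemma comul_coassoc (t : H -> H -> H -> k) h :
  (forall y z, scalar (fun x => t x y z)) -> (forall x z, scalar (fun y => t x y z)) ->
  (forall x y, scalar (fun z => t x y z)) ->
  \sum_(p <- D h) \sum_(q <- D p.1) t q.1 q.2 p.2 =
  \sum_(p <- D h) \sum_(q <- D p.2) t p.1 q.1 q.2.
Proof.
move=> t1 t2 t3; apply: (D_coassoc hopfH); split; last split.
- by move=> a x x' y z; apply: t1.
- by move=> a y y' x z; apply: t2.
- by move=> a z z' x y; apply: t3.
Qed.

Lemma eps_scalar : scalar eps.
Proof. exact: (eps_linear hopfH). Qed.

Lemma comul_counitl phi h : scalar phi -> \sum_(p <- D h) eps p.1 * phi p.2 = phi h.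
Proof.
move=> phiP; rewrite -[in RHS](counit_l hopfH h) scalarf_sum //.
by apply: eq_bigr => p _; rewrite scalarfZ.
Qed.

Record bilform := Bilform { bilform_fun :> H -> H -> k; bilformP : bilinear_form bilform_fun }.

Lemma bilform_scalarl (F : bilform) y : scalar (F^~ y).
Proof. by have [] := (bilinear_formP F).1 (bilformP F). Qed.

Lemma bilform_scalarr (F : bilform) x : scalar (F x).
Proof. by have [] := (bilinear_formP F).1 (bilformP F). Qed.

Lemma bilform_ext (F G : bilform) : F =2 G -> F = G.
Proof.
case: F G => [f fP] [g gP] /= fg; have f_eq_g : f = g by apply/funext => x; apply/funext.
by subst g; congr Bilform; apply: Prop_irrelevance.
Qed.

HB.instance Definition _ := gen_eqMixin bilform.
HB.instance Definition _ := gen_choiceMixin bilform.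

Ltac scalar_tac := repeat first
  [ apply: scalar_sumf => ? | apply: bilform_scalarl | apply: bilform_scalarr
  | apply: scalar_mulrf | apply: scalar_mullf | apply: eps_scalar ].

Fact zero_bilform_subproof : bilinear_form (fun _ _ : H => 0 : k).
Proof. by apply/bilinear_formP; split=> ? a x y; rewrite mulr0 addr0. Qed.

Fact add_bilform_subproof (F G : bilform) : bilinear_form (fun x y => F x y + G x y).
Proof. by apply/bilinear_formP; split=> ?; apply: scalar_addf; scalar_tac. Qed.

Fact opp_bilform_subproof (F : bilform) : bilinear_form (fun x y => - F x y).
Proof. by apply/bilinear_formP; split=> ?; apply: scalar_oppf; scalar_tac. Qed.

Definition zero_bilform := Bilform zero_bilform_subproof.
Definition add_bilform F G := Bilform (add_bilform_subproof F G).
Definition opp_bilform F := Bilform (opp_bilform_subproof F).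

Lemma add_bilformA : associative add_bilform.
Proof. by move=> F G K; apply: bilform_ext => x y /=; rewrite addrA. Qed.

Lemma add_bilformC : commutative add_bilform.
Proof. by move=> F G; apply: bilform_ext => x y /=; rewrite addrC. Qed.

Lemma add0_bilform : left_id zero_bilform add_bilform.
Proof. by move=> F; apply: bilform_ext => x y /=; rewrite add0r. Qed.

Lemma addN_bilform : left_inverse zero_bilform opp_bilform add_bilform.
Proof. by move=> F; apply: bilform_ext => x y /=; rewrite addNr. Qed.

HB.instance Definition _ :=
  GRing.isZmodule.Build bilform add_bilformA add_bilformC add0_bilform addN_bilform.

(* The convolution product, dual to the coproduct of the coalgebra [H (x) H]. *)
Fact mul_bilform_subproof (F G : bilform) : bilinear_form (fun x y =>
  \sum_(p <- D x) \sum_(q <- D y) F p.1 q.1 * G p.2 q.2).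
Proof.
apply/bilinear_formP; split=> z /=.
  by apply: (comul_scalar (t := fun a b => \sum_(q <- D z) F a q.1 * G b q.2)) => ?;
     scalar_tac.
under [fun y => _]funext => y do rewrite exchange_big.
by apply: (comul_scalar (t := fun a b => \sum_(p <- D z) F p.1 a * G p.2 b)) => ?;
   scalar_tac.
Qed.

Definition mul_bilform F G := Bilform (mul_bilform_subproof F G).

Fact one_bilform_subproof : bilinear_form (fun x y => eps x * eps y).
Proof. by apply/bilinear_formP; split=> ?; scalar_tac. Qed.

Definition one_bilform := Bilform one_bilform_subproof.

Lemma mul_bilformC : commutative mul_bilform.
Proof.
move=> F G; apply: bilform_ext => x y /=.
rewrite (comul_cocomm (t := fun a b => \sum_(q <- D y) F a q.1 * G b q.2));
  try by move=> ?; scalar_tac.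
apply: eq_bigr => p _.
rewrite (comul_cocomm (t := fun a b => F p.2 a * G p.1 b)); try by move=> ?; scalar_tac.
by apply: eq_bigr => q _; rewrite mulrC.
Qed.

Lemma mul1_bilform : left_id one_bilform mul_bilform.
Proof.
move=> F; apply: bilform_ext => x y /=.
rewrite -(comul_counitl (phi := F^~ y)) //; last by scalar_tac.
apply: eq_bigr => p _.
rewrite -(comul_counitl (phi := fun c => eps p.1 * F p.2 c)); last by scalar_tac.
by apply: eq_bigr => q _; rewrite mulrCA mulrA.
Qed.

Lemma mul_bilformDl : left_distributive mul_bilform add_bilform.
Proof.
move=> F G K; apply: bilform_ext => x y /=; rewrite -big_split; apply: eq_bigr => p _.
by rewrite -big_split; apply: eq_bigr => q _ /=; rewrite mulrDl.
Qed.

Lemma mul_bilformA : associative mul_bilform.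
Proof.
move=> F G K; apply: bilform_ext => x y /=; symmetry.
pose T a b c := \sum_(q <- D y) \sum_(q' <- D q.1) F a q'.1 * G b q'.2 * K c q.2.
transitivity (\sum_(p <- D x) \sum_(p' <- D p.2) T p.1 p'.1 p'.2).
  transitivity (\sum_(p <- D x) \sum_(p' <- D p.1) T p'.1 p'.2 p.2); last first.
    by apply: comul_coassoc => *; rewrite /T; scalar_tac.
  apply: eq_bigr => p _; rewrite /T exchange_big /=; apply: eq_bigr => q _.
  rewrite mulr_suml /=; apply: eq_bigr => p' _; rewrite mulr_suml /=.
  by apply: eq_bigr => q' _.
apply: eq_bigr => p _.
transitivity (\sum_(q <- D y) \sum_(p' <- D p.2) F p.1 q.1 *
   \sum_(q0 <- D q.2) G p'.1 q0.1 * K p'.2 q0.2); last first.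
  by apply: eq_bigr => q _; rewrite mulr_sumr.
rewrite [RHS]exchange_big /=; apply: eq_bigr => p' _; rewrite /T.
rewrite (comul_coassoc (t := fun a b c => F p.1 a * G p'.1 b * K p'.2 c));
  try by move=> *; scalar_tac.
apply: eq_bigr => q _; rewrite mulr_sumr /=; apply: eq_bigr => q' _; by rewrite mulrA.
Qed.

HB.instance Definition _ := GRing.Zmodule_isComPzRing.Build bilform
  mul_bilformA mul_bilformC mul1_bilform mul_bilformDl.

Lemma bilformD (F G : bilform) x y : (F + G) x y = F x y + G x y.
Proof. by []. Qed.

Lemma bilformM (F G : bilform) x y :
  (F * G) x y = \sum_(p <- D x) \sum_(q <- D y) F p.1 q.1 * G p.2 q.2.
Proof. by []. Qed.

Lemma bilform_sum I (r : seq I) (P : pred I) (F : I -> bilform) x y :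
  (\sum_(i <- r | P i) F i) x y = \sum_(i <- r | P i) F i x y.
Proof.
elim: r => [|i r IHr]; first by rewrite !big_nil.
by rewrite !big_cons; case: (P i); rewrite /= IHr.
Qed.

Lemma bilform_sign (b : bool) (F : bilform) x y : ((-1) ^+ b * F) x y = (-1) ^+ b * F x y.
Proof. by case: b; rewrite ?expr1 ?expr0 ?mulN1r ?mul1r. Qed.

Lemma size_iterD n x t : t \in iterD D n x -> size t = n.+1.
Proof.
elim: n x t => [|n IHn] x t /=; first by rewrite inE => /eqP->.
by case/flattenP=> _ /mapP[p _ ->] /mapP[t' /IHn size_t' ->] /=; rewrite size_t'.
Qed.

Lemma iterD_sum n x (G : seq H -> k) : \sum_(t <- iterD D n.+1 x) G t =
  \sum_(p <- D x) \sum_(t <- iterD D n p.2) G (p.1 :: t).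
Proof. by rewrite big_flatten big_map; apply: eq_bigr => p _; rewrite big_map. Qed.

Definition seq_multilinear n (G : seq H -> k) :=
  forall l r, (size l + size r)%N = n -> scalar (fun z => G (l ++ z :: r)).

Lemma iterD_scalar n G : seq_multilinear n G -> scalar (fun x => \sum_(t <- iterD D n x) G t).
Proof.
elim: n G => [|n IHn] G Gmulti.
  by move=> a x y /=; rewrite !big_seq1; apply: (Gmulti [::] [::]).
under [fun x => _]funext => x do rewrite iterD_sum.
apply: (comul_scalar (t := fun a b => \sum_(t <- iterD D n b) G (a :: t))) => [y|x].
  move=> a x x'; rewrite mulr_sumr -big_split big_seq [RHS]big_seq /=.
  by apply: eq_bigr => t /size_iterD size_t; apply: (Gmulti [::] t); rewrite size_t.
apply: (IHn (fun t => G (x :: t))) => l r size_lr.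
by apply: (Gmulti (x :: l) r); rewrite /= addSn size_lr.
Qed.

Lemma iterD_eps n x : \sum_(t <- iterD D n x) \prod_(a < n.+1) eps (nth 0 t a) = eps x.
Proof.
elim: n x => [|n IHn] x; first by rewrite big_seq1 big_ord1.
rewrite iterD_sum -[RHS](comul_counitl _ eps_scalar); apply: eq_bigr => p _.
by rewrite -(IHn p.2) mulr_sumr; apply: eq_bigr => t _; rewrite big_ord_recl.
Qed.

Lemma bilform_prod n (F : 'I_n.+1 -> bilform) x y :
  (\prod_a F a) x y = \sum_(s <- iterD D n x) \sum_(t <- iterD D n y)
     \prod_a F a (nth 0 s a) (nth 0 t a).
Proof.
elim: n F x y => [|n IHn] F x y; first by rewrite /= !big_seq1 !big_ord1.
rewrite big_ord_recl bilformM iterD_sum; apply: eq_bigr => p _.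
under [RHS]eq_bigr => s _ do rewrite iterD_sum.
rewrite [RHS]exchange_big; apply: eq_bigr => q _ /=.
rewrite IHn mulr_sumr; apply: eq_bigr => s _; rewrite mulr_sumr; apply: eq_bigr => t _.
by rewrite [RHS]big_ord_recl.
Qed.

Lemma bilform_det n (M : 'M[bilform]_n.+1) x y :
  (\det M) x y = \sum_(s <- iterD D n x) \sum_(t <- iterD D n y)
     \det (\matrix_(a, b) M a b (nth 0 s a) (nth 0 t a)).
Proof.
rewrite /determinant bilform_sum.
under eq_bigr => sigma _ do rewrite bilform_sign bilform_prod mulr_sumr.
rewrite exchange_big; apply: eq_bigr => s _.
under eq_bigr => sigma _ do rewrite mulr_sumr.
rewrite exchange_big; apply: eq_bigr => t _ /=.
by apply: eq_bigr => sigma _; congr (_ * _); apply: eq_bigr => a _; rewrite mxE.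
Qed.

(** * Wedge functionals and the filtration *)

Section WedgeFunctionals.
Variables (V : vectType k) (act : H -> V -> V).
Hypothesis modV : is_module act.
Local Notation tri := (Defs.tri eps act).
Local Notation dual := 'Hom(V, k^o).

Lemma triDl a x y v : tri (a *: x + y) v = a *: tri x v + tri y v.
Proof.
rewrite /tri (act_linear_l modV) (eps_linear hopfH) scalerDl -scalerA scalerBr.
by rewrite addrACA opprD.
Qed.

Lemma triDr x a v w : tri x (a *: v + w) = a *: tri x v + tri x w.
Proof.
rewrite /tri (act_linear_r modV) scalerDr scalerA mulrC -scalerA scalerBr.
by rewrite addrACA opprD.
Qed.

Lemma tri1 v : tri 1 v = 0.
Proof. by rewrite /tri (act_one modV) (eps_one hopfH) scale1r subrr. Qed.

Lemma triM x y v : tri (x * y) v = tri x (act y v) + eps x *: tri y v.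
Proof. by rewrite /tri (act_mul modV) (eps_mul hopfH) scalerBr scalerA addrA subrK. Qed.

Lemma dual_scalar (U : lmodType k) (f : dual) (g : U -> V) :
  linear g -> scalar (fun x => f (g x)).
Proof. by move=> gP a x y; rewrite gP linearP. Qed.

Definition wedge_tri n (v : 'I_n.+1 -> V) (f : 'I_n.+1 -> dual) (x : H) : k :=
  \sum_(t <- iterD D n x) wedge_pair (fun a => tri (nth 0 t a) (v a)) f.

Lemma wedge_pair_multilinear n (v : 'I_n.+1 -> V) (f : 'I_n.+1 -> dual) :
  seq_multilinear n (fun t => wedge_pair (fun a => tri (nth 0 t a) (v a)) f).
Proof.
move=> l r size_lr; have lt_l_n : (size l < n.+1)%N by rewrite -size_lr ltnS leq_addr.
pose G (w : 'I_n.+1 -> H) := \det (\matrix_(a, b) f b (tri (w a) (v a))).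
have G_multi : multilinear G.
  apply: (det_multilinear (G := fun a b x => f b (tri x (v a)))) => a b.
  by apply: dual_scalar => ? ? ?; apply: triDl.
pose w0 (a : 'I_n.+1) := nth 0 (l ++ 0 :: r) a.
suff -> : (fun z => wedge_pair (fun a => tri (nth 0 (l ++ z :: r) a) (v a)) f) =
          (fun z => G [eta w0 with Ordinal lt_l_n |-> z]) by apply: G_multi.
apply: funext => z; rewrite /wedge_pair /G; congr (\det _).
apply/matrixP; move=> a b; rewrite !mxE /= nth_cat_cons -(inj_eq val_inj) /=.
by case: eqP.
Qed.

Lemma wedge_tri_scalar n v f : scalar (@wedge_tri n v f).
Proof. exact/iterD_scalar/wedge_pair_multilinear. Qed.

Lemma wedge_tri_multilinear_v n (f : 'I_n.+1 -> dual) x :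
  multilinear (fun v => wedge_tri v f x).
Proof.
move=> w a0; apply: scalar_sumf => t.
by apply: (det_multilinear (G := fun a b x => f b (tri (nth 0 t a) x))) => a b;
  apply: dual_scalar => ? ? ?; apply: triDr.
Qed.

Lemma wedge_tri_multilinear_f n (v : 'I_n.+1 -> V) x :
  multilinear (fun f => wedge_tri v f x).
Proof.
move=> w a0; apply: scalar_sumf => t.
pose G (f' : 'I_n.+1 -> dual) := \det (\matrix_(b, a) f' b (tri (nth 0 t a) (v a))).
have G_multi : multilinear G.
  apply: (det_multilinear (G := fun b a (g : dual) => g (tri (nth 0 t a) (v a)))).
  by move=> b a c g g'; rewrite add_lfunE scale_lfunE.
suff -> : (fun g => wedge_pair (fun a => tri (nth 0 t a) (v a)) [eta w with a0 |-> g]) =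
          (fun g => G [eta w with a0 |-> g]) by apply: G_multi.
apply: funext => g; rewrite /wedge_pair /G -det_tr; congr (\det _).
by apply/matrixP; move=> a b; rewrite !mxE.
Qed.

(* [Kdual n h] tests [Delta h \in K'_n (x) H] against the functionals
   [wedge_tri v f (x) mu]; note that [Kp n x] unfolds to
   [forall v f, wedge_tri v f x = 0]. *)
Definition Kdual n h := forall v f mu, scalar mu ->
  \sum_(p <- D h) @wedge_tri n v f p.1 * mu p.2 = 0.

Lemma wedge_tri_mul_scalar n v f mu : scalar mu ->
  bilinear_form (fun x y => @wedge_tri n v f x * mu y).
Proof.
move=> muP; apply/bilinear_formP; split=> ?; last exact: scalar_mullf.
exact/scalar_mulrf/wedge_tri_scalar.
Qed.

Lemma K_Kdual n h : K D eps act n h -> Kdual n h.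
Proof.
move=> [s [s_Kp Dh_s]] v f mu muP.
have := Dh_s _ (wedge_tri_mul_scalar v f muP); rewrite /sw2 => ->.
rewrite big_seq big1 // => p /s_Kp Kp_p; by rewrite [wedge_tri _ _ _]Kp_p mul0r.
Qed.

Lemma Kp_of_basis n x :
  (forall (cv : {ffun 'I_n.+1 -> 'I_(\dim {: V})}) (cf : {ffun 'I_n.+1 -> 'I_(\dim {: dual})}),
     wedge_tri (fun a => (vbasis {: V})`_(cv a)) (fun a => (vbasis {: dual})`_(cf a)) x = 0) ->
  Kp D eps act n x.
Proof.
move=> x_basis v f.
apply: (multilinear_basis_eq0 (G := fun f' => wedge_tri v f' x)) => [|cf].
  exact: wedge_tri_multilinear_f.
apply: (multilinear_basis_eq0 (G := fun v' => wedge_tri v' _ x)) => [|cv].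
  exact: wedge_tri_multilinear_v.
rewrite -(x_basis [ffun a => cv a] [ffun a => cf a]).
by congr (wedge_tri _ _ _); apply: funext => a; rewrite ffunE.
Qed.

Lemma Kdual_K n h : Kdual n h -> K D eps act n h.
Proof.
move=> Kh.
pose L (c : {ffun 'I_n.+1 -> 'I_(\dim {: V})} * {ffun 'I_n.+1 -> 'I_(\dim {: dual})}) :=
  wedge_tri (fun a => (vbasis {: V})`_(c.1 a)) (fun a => (vbasis {: dual})`_(c.2 a)).
have [m [e [lam [lam_span LE]]]] :=
  functionals_dual_family (L := L) (fun c => wedge_tri_scalar _ _).
pose pr x := x - \sum_j lam j x *: e j.
have Kp_pr x : Kp D eps act n (pr x).
  apply: Kp_of_basis => cv cf; change (L (cv, cf) (pr x) = 0).
  have LP c : scalar (L c) by apply: wedge_tri_scalar.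
  rewrite scalarfB // scalarf_sum // [L _ x]LE; apply/eqP; rewrite subr_eq0.
  by apply/eqP/eq_bigr => j _; rewrite scalarfZ.
exists [seq (pr p.1, p.2) | p <- D h]; split; first by move=> _ /mapP[p _ ->]; apply: Kp_pr.
move=> b /bilinear_formP[bl br]; rewrite /sw2 big_map /=.
have b_pr x y : b (pr x) y = b x y - \sum_j lam j x * b (e j) y.
  have /= -> := scalarfB (bl y) x (\sum_j lam j x *: e j).
  rewrite (scalarf_sum _ _ (bl y)); congr (_ - _).
  by apply: eq_bigr => j _; rewrite (scalarfZ (bl y)).
under [RHS]eq_bigr => p _ do rewrite b_pr.
rewrite sumrB exchange_big /= [X in _ - X]big1 ?subr0 // => j _.
have [c lamE] := lam_span j.
under eq_bigr => p _ do rewrite lamE mulr_suml.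
rewrite exchange_big big1 // => i _.
under eq_bigr => p _ do rewrite -mulrA.
by rewrite -mulr_sumr Kh ?mulr0.
Qed.

Fact act_tri_subproof v (f : dual) : bilinear_form (fun x y => f (tri x (act y v))).
Proof.
apply/bilinear_formP; split=> z /=.
  by apply: dual_scalar => a x y; apply: triDl.
apply: dual_scalar => a x y.
by rewrite (act_linear_l modV) triDr.
Qed.

Fact eps_tri_subproof v (f : dual) : bilinear_form (fun x y => eps x * f (tri y v)).
Proof.
apply/bilinear_formP; split=> z; first by scalar_tac.
by apply/scalar_mullf/dual_scalar => a x y; apply: triDl.
Qed.

Fact tri_eps_subproof v (f : dual) : bilinear_form (fun x y => f (tri x v) * eps y).
Proof.
apply/bilinear_formP; split=> z; last by scalar_tac.
by apply/scalar_mulrf/dual_scalar => a x y; apply: triDl.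
Qed.

Definition act_tri v f := Bilform (act_tri_subproof v f).
Definition eps_tri v f := Bilform (eps_tri_subproof v f).
Definition tri_eps v f := Bilform (tri_eps_subproof v f).

Fact pull_mul_subproof (F : bilform) : bilinear_form (fun x y => F (x * y) 1).
Proof.
apply/bilinear_formP; split=> z a x y /=.
  by rewrite mulrDl -scalerAl; apply: bilform_scalarl.
by rewrite mulrDr -scalerAr; apply: bilform_scalarl.
Qed.

Definition pull_mul F := Bilform (pull_mul_subproof F).

Lemma pull_mul_zmod_morphism : zmod_morphism pull_mul.
Proof. by move=> F G; apply: bilform_ext. Qed.

Lemma pull_mul_monoid_morphism : monoid_morphism pull_mul.
Proof.
split=> [|F G]; apply: bilform_ext => x y /=.
  by rewrite (eps_mul hopfH) (eps_one hopfH) mulr1.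
transitivity (\sum_(r <- D (x * y)) F r.1 1 * G r.2 1).
  by apply: eq_bigr => r _; apply: (comul1 (t := fun a b => F r.1 a * G r.2 b)) => ?; scalar_tac.
by apply: (comulM (t := fun a b => F a 1 * G b 1)) => ?; scalar_tac.
Qed.

HB.instance Definition _ :=
  GRing.isZmodMorphism.Build bilform bilform pull_mul pull_mul_zmod_morphism.
HB.instance Definition _ :=
  GRing.isMonoidMorphism.Build bilform bilform pull_mul pull_mul_monoid_morphism.

Lemma act_tri_add_eps_tri v (f : dual) : act_tri v f + eps_tri v f = pull_mul (tri_eps v f).
Proof.
apply: bilform_ext => x y.
rewrite bilformD (_ : pull_mul _ x y = f (tri (x * y) v) * eps 1) // (eps_one hopfH) mulr1.
by rewrite triM linearD linearZ.
Qed.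

Section Product.
Variables g h : H.

Definition annihilates (Psi : bilform) := forall Theta, (Psi * Theta) g h = 0.

Lemma annihilates0 : annihilates 0.
Proof. by move=> Theta; rewrite mul0r. Qed.

Lemma annihilatesD Psi Phi : annihilates Psi -> annihilates Phi -> annihilates (Psi + Phi).
Proof. by move=> annPsi annPhi Theta; rewrite mulrDl bilformD annPsi annPhi addr0. Qed.

Lemma annihilatesM Psi Phi : annihilates Phi -> annihilates (Psi * Phi).
Proof. by move=> annPhi Theta; rewrite [Psi * Phi]mulrC -mulrA annPhi. Qed.

Lemma det_act_tri_annihilates i (w : 'I_i.+1 -> V) (f : 'I_i.+1 -> dual) :
  Kdual i g -> annihilates (\det (\matrix_(a, b) act_tri (w a) (f b))).
Proof.
move=> Kg Theta; rewrite bilformM.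
transitivity (\sum_(q <- D h) \sum_(u <- iterD D i q.1) \sum_(p <- D g)
   wedge_tri (fun a => act (nth 0 u a) (w a)) f p.1 * Theta p.2 q.2); last first.
  rewrite big1 // => q _; rewrite big1 // => u _.
  exact: (Kg _ _ (Theta^~ q.2) (bilform_scalarl _ _)).
rewrite exchange_big; apply: eq_bigr => q _.
rewrite [RHS]exchange_big; apply: eq_bigr => p _.
rewrite bilform_det mulr_suml; under eq_bigr => s _ do rewrite mulr_suml.
rewrite exchange_big; apply: eq_bigr => u _.
rewrite /wedge_tri mulr_suml; apply: eq_bigr => s _; congr (_ * _).
by rewrite /wedge_pair; congr (\det _); apply/matrixP; move=> a b; rewrite !mxE.
Qed.

Lemma det_eps_tri_annihilates j (w : 'I_j.+1 -> V) (f : 'I_j.+1 -> dual) :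
  Kdual j h -> annihilates (\det (\matrix_(a, b) eps_tri (w a) (f b))).
Proof.
move=> Kh Theta.
have detE x y : (\det (\matrix_(a, b) eps_tri (w a) (f b))) x y = eps x * wedge_tri w f y.
  rewrite bilform_det -(iterD_eps j x) mulr_suml; apply: eq_bigr => s _.
  rewrite /wedge_tri mulr_sumr; apply: eq_bigr => u _.
  by rewrite -det_scale_rows /wedge_pair; congr (\det _); apply/matrixP; move=> a b; rewrite !mxE.
rewrite bilformM exchange_big -[RHS](Kh w f (Theta g)); last exact: bilform_scalarr.
apply: eq_bigr => q _; rewrite -(comul_counitl (phi := Theta^~ q.2)); last exact: bilform_scalarl.
by rewrite mulr_sumr; apply: eq_bigr => p _; rewrite detE mulrCA !mulrA.
Qed.

End Product.

Fact mul_scalar_subproof (mu : H -> k) : scalar mu -> bilinear_form (fun x y => mu (x * y)).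
Proof.
move=> muP; apply/bilinear_formP; split=> z a x y /=.
  by rewrite mulrDl -scalerAl muP.
by rewrite mulrDr -scalerAr muP.
Qed.

Lemma Kdual_mul i j g h : Kdual i g -> Kdual j h -> Kdual (i + j) (g * h).
Proof.
move=> Kg Kh v f mu muP.
pose Psi := \det (\matrix_(a, b) (act_tri (v a) (f b) + eps_tri (v a) (f b))).
have annPsi : annihilates g h Psi.
  apply: (det_sum_rows_ideal (annihilates0 g h) (@annihilatesD g h) (@annihilatesM g h)
    (m1 := i.+1) (m2 := j.+1)); last by rewrite addSn addnS.
    by move=> w' f'; apply: det_act_tri_annihilates.
  by move=> w' f'; apply: det_eps_tri_annihilates.
have PsiE x y : Psi x y = wedge_tri v f (x * y).
  have -> : Psi = pull_mul (\det (\matrix_(a, b) tri_eps (v a) (f b))).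
    rewrite -det_map_mx; congr (\det _).
    by apply/matrixP => a b; rewrite !mxE act_tri_add_eps_tri.
  rewrite /= bilform_det /wedge_tri; apply: eq_bigr => s _.
  rewrite -[RHS]mulr1 -(eps_one hopfH) -(iterD_eps (i + j) 1) mulr_sumr.
  apply: eq_bigr => u _; rewrite mulrC -det_scale_rows /wedge_pair.
  by congr (\det _); apply/matrixP => a b; rewrite !mxE mulrC.
rewrite (comulM (t := fun a b => wedge_tri v f a * mu b)); last 2 first.
- by move=> ?; apply/scalar_mulrf/wedge_tri_scalar.
- by move=> ?; apply: scalar_mullf.
rewrite -[RHS](annPsi (Bilform (mul_scalar_subproof muP))) bilformM.
by apply: eq_bigr => p _; apply: eq_bigr => q _; rewrite PsiE.
Qed.

Lemma Kdual_one : Kdual 1 1.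
Proof.
move=> v f mu muP; rewrite (comul1 (t := fun a b => wedge_tri v f a * mu b)); last 2 first.
- by move=> ?; apply/scalar_mulrf/wedge_tri_scalar.
- by move=> ?; apply: scalar_mullf.
suff -> : wedge_tri v f 1 = 0 by rewrite mul0r.
rewrite /wedge_tri iterD_sum; under eq_bigr => p _ do rewrite big_seq1.
have G_multi := wedge_pair_multilinear v f.
rewrite (comul1 (t := fun a b => wedge_pair (fun c => tri (nth 0 [:: a; b] c) (v c)) f)).
- rewrite /wedge_pair (_ : \matrix_(a, b) _ = 0) ?det0 //.
  apply/matrixP => a b; rewrite !mxE.
  have -> : nth 0 [:: 1; 1] a = 1 :> H by case: a => [[|[|]]].
  by rewrite tri1 linear0.
- by move=> b; apply: (G_multi [::] [:: b]).
- by move=> a; apply: (G_multi [:: a] [::]).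
Qed.

Lemma KdualP n h : K D eps act n h <-> Kdual n h.
Proof. by split; [apply: K_Kdual | apply: Kdual_K]. Qed.

End WedgeFunctionals.

End ConvolutionAlgebra.

Theorem mainTheorem13 (k : fieldType) (H : algType k) (V : vectType k)
    (D : H -> seq (H * H)) (eps : H -> k) (S : H -> H) (act : H -> V -> V) :
  [pchar k] =i pred0 ->
  is_hopf D eps S ->
  cocommutative D ->
  is_module act ->
  (forall (i : nat) (h : H), K D eps act i h -> K D eps act i.+1 h) /\
  (forall (i j : nat) (g h : H),
      K D eps act i g -> K D eps act j h -> K D eps act (i + j) (g * h)).
Proof.
move=> _ hopfH cocomD modV.
have KP := KdualP hopfH modV.
have K_mul i j g h : K D eps act i g -> K D eps act j h -> K D eps act (i + j) (g * h).
  by move=> /KP Kg /KP Kh; apply/KP/(Kdual_mul hopfH cocomD modV).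
split=> // i h Kh; rewrite -addn1 -[h]mulr1; apply: K_mul Kh _.
exact/KP/(Kdual_one hopfH modV).
Qed.
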